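(* Let $b>0$, $\beta>0$, $\nu>0$, $\delta>0$, $\alpha>0$ and $p\in(0,1)$, and consider the system \[ S'=b(1-S-pI)-(\beta-\delta)SI+\alpha R,\qquad I'=\big(\beta S-((1-p)b+\nu+\delta)+\delta I\big)I,\qquad R'=\nu I-(b+\alpha-\delta I)R \] on the region $\mathcal{D}^{\mathrm{fra}}=\{(S,I,R): S\ge 0, I\ge 0, R\ge 0, S+I+R=1\}$. Let $\gamma=(1-p)b+\nu+\delta$ and $R_0=\beta/\gamma$. Then the disease-free equilibrium $E_0=(1,0,0)$ is globally asymptotically stable in $\mathcal{D}^{\mathrm{fra}}$ if and only if $R_0\le 1$, and $E_0$ is unstable when $R_0>1$.
   Context: The variables $S,I,R$ are the fractions of susceptible, infectious and recovered individuals in an SIRS model with vertical transmission (fraction $p$ of newborns of infectives infected), birth rate $b$, transmission rate $\beta$, recovery rate $\nu$, disease-induced death rate $\delta$, and rate $\alpha$ of loss of immunity. Globally asymptotically stable (GAS) in a region means Lyapunov stable and attracting every solution starting in that region. *)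

From Stdlib Require Import Reals.
From Coquelicot Require Import Coquelicot.
Open Scope R_scope.

Definition fS (b beta nu delta alpha p : R) (S I Rc : R) : R :=
  b * (1 - S - p * I) - (beta - delta) * S * I + alpha * Rc.
Definition fI (b beta nu delta alpha p : R) (S I Rc : R) : R :=
  (beta * S - ((1 - p) * b + nu + delta) + delta * I) * I.
Definition fR (b beta nu delta alpha p : R) (S I Rc : R) : R :=
  nu * I - (b + alpha - delta * I) * Rc.

Definition is_solution (b beta nu delta alpha p : R) (S I Rc : R -> R) : Prop :=
  forall t, 0 <= t ->
    is_derive S t (fS b beta nu delta alpha p (S t) (I t) (Rc t)) /\
    is_derive I t (fI b beta nu delta alpha p (S t) (I t) (Rc t)) /\
    is_derive Rc t (fR b beta nu delta alpha p (S t) (I t) (Rc t)).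

Definition in_Dfra (s i r : R) : Prop :=
  0 <= s /\ 0 <= i /\ 0 <= r /\ s + i + r = 1.

Definition distE0 (s i r : R) : R := sqrt ((s - 1)^2 + i^2 + r^2).

Definition E0_stable (b beta nu delta alpha p : R) : Prop :=
  forall eps, 0 < eps -> exists d, 0 < d /\
    forall S I Rc : R -> R,
      is_solution b beta nu delta alpha p S I Rc ->
      in_Dfra (S 0) (I 0) (Rc 0) ->
      distE0 (S 0) (I 0) (Rc 0) < d ->
      forall t, 0 <= t -> distE0 (S t) (I t) (Rc t) < eps.

Definition E0_attracting (b beta nu delta alpha p : R) : Prop :=
  forall S I Rc : R -> R,
    is_solution b beta nu delta alpha p S I Rc ->
    in_Dfra (S 0) (I 0) (Rc 0) ->
    is_lim S p_infty 1 /\ is_lim I p_infty 0 /\ is_lim Rc p_infty 0.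

Definition E0_GAS (b beta nu delta alpha p : R) : Prop :=
  E0_stable b beta nu delta alpha p /\ E0_attracting b beta nu delta alpha p.

Definition E0_unstable (b beta nu delta alpha p : R) : Prop :=
  ~ E0_stable b beta nu delta alpha p.

Definition gamma0 (b nu delta p : R) : R := (1 - p) * b + nu + delta.
Definition basicR0 (b beta nu delta p : R) : R := beta / gamma0 b nu delta p.

From Stdlib Require Import Reals Lra Lia Psatz Factorial.
From Coquelicot Require Import Coquelicot.
Open Scope R_scope.

(* When [R0 <= 1], the triangle [D^fra] is forward invariant (the total population [N] obeys
   the linear equation [N' = (delta I - b) N]) and on it [I' <= -((1 - p) b + nu) I^2], so [I]
   decays like [1/t]; then [R' <= nu A - (b + alpha - delta A) R] while [I <= A] drives [R] to
   [0], and [S = 1 - I - R] tends to [1]. When [R0 > 1], near [E0] one has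
   [I' >= ((beta - gamma)/2) I], so [I] grows exponentially away from [0]; the solutions starting
   near [E0] needed for this are built by Picard iteration for a clamped, globally Lipschitz
   version of the [(I, R)] system that agrees with the true one on [D^fra]. Every estimate rests
   on one comparison principle: if [x(t0) >= 0] and [x' >= a x] wherever [x < 0], with [a]
   continuous, then [x] stays nonnegative. *)

(** * Comparison principle *)

Lemma continuous_of_is_derive (f : R -> R) (x l : R) : is_derive f x l -> continuous f x.
Proof. intros H. apply (@ex_derive_continuous R_AbsRing R_NormedModule). exists l. exact H. Qed.

Lemma is_derive_const_R (c t : R) : is_derive (fun _ => c) t 0.
Proof. apply (@is_derive_const R_AbsRing R_NormedModule). Qed.

Lemma continuous_plus_R (f g : R -> R) (t : R) :
  continuous f t -> continuous g t -> continuous (fun s => f s + g s) t.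
Proof. apply (@continuous_plus R_UniformSpace R_AbsRing R_NormedModule). Qed.

Lemma continuous_scal_R (c : R) (f : R -> R) (t : R) :
  continuous f t -> continuous (fun s => c * f s) t.
Proof. apply (@continuous_scal_r R_UniformSpace R_AbsRing R_NormedModule). Qed.

Lemma continuous_near (f : R -> R) (t eps : R) : continuous f t -> 0 < eps ->
  exists d, 0 < d /\ forall s, Rabs (s - t) < d -> Rabs (f s - f t) < eps.
Proof.
  intros Hc He.
  destruct (proj1 (filterlim_locally _ _) Hc (mkposreal _ He)) as [d Hd].
  exists d. split; [apply cond_pos|]. intros s Hs. exact (Hd s Hs).
Qed.

Lemma last_nonneg_point (x : R -> R) (t0 t1 : R) :
  (forall t, t0 <= t -> continuous x t) -> 0 <= x t0 -> x t1 < 0 -> t0 <= t1 ->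
  exists m, t0 <= m < t1 /\ 0 <= x m /\ forall s, m < s <= t1 -> x s < 0.
Proof.
  intros Hc H0 H1 Ht.
  set (E := fun s => t0 <= s <= t1 /\ 0 <= x s).
  destruct (completeness E) as [m [Hub Hlub]].
  { exists t1. intros s [Hs _]. lra. }
  { exists t0. split; [lra | exact H0]. }
  assert (Hm0 : t0 <= m) by (apply Hub; split; [lra | exact H0]).
  assert (Hm1 : m <= t1) by (apply Hlub; intros s [Hs _]; lra).
  assert (Hxm : 0 <= x m).
  { destruct (Rle_lt_dec 0 (x m)) as [|Hneg]; [assumption|].
    destruct (continuous_near x m (- x m) (Hc m Hm0) ltac:(lra)) as [d [Hd Hnear]].
    assert (m <= m - d / 2); [|lra].
    apply Hlub. intros s [Hs Hxs]. destruct (Rle_lt_dec s (m - d / 2)) as [|Hs']; [assumption|].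
    assert (Hsm : s <= m) by (apply Hub; split; assumption).
    assert (Hdist : Rabs (s - m) < d) by (rewrite Rabs_left1; lra).
    specialize (Hnear s Hdist). apply Rabs_def2 in Hnear. lra. }
  exists m. split; [|split; [exact Hxm|]].
  - split; [exact Hm0|]. destruct (Req_dec m t1); [subst; lra | lra].
  - intros s Hs. destruct (Rle_lt_dec 0 (x s)) as [Hxs|]; [|assumption].
    assert (s <= m) by (apply Hub; split; [lra | exact Hxs]). lra.
Qed.

(* Between the last nonnegative point [m] and a later negative value, [a <= K] and [x < 0]
   make [x exp(-K t)] nondecreasing, which is incompatible with [x] dropping below [0]. *)
Lemma nonneg_forward_invariant (x dx a : R -> R) (t0 : R) :
  (forall t, t0 <= t -> is_derive x t (dx t)) ->
  (forall t, t0 <= t -> continuous a t) ->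
  0 <= x t0 ->
  (forall t, t0 <= t -> x t < 0 -> a t * x t <= dx t) ->
  forall t, t0 <= t -> 0 <= x t.
Proof.
  intros Hd Ha H0 Hi t1 Ht1.
  destruct (Rle_lt_dec 0 (x t1)) as [|Hneg]; [assumption | exfalso].
  destruct (last_nonneg_point x t0 t1) as [m [Hm [Hxm Hafter]]]; try assumption.
  { intros t Ht. exact (continuous_of_is_derive _ _ _ (Hd t Ht)). }
  destruct (continuous_near a m 1 (Ha m (proj1 Hm)) ltac:(lra)) as [eta [Heta Hnear]].
  set (K := a m + 1).
  set (t2 := Rmin t1 (m + eta / 2)).
  assert (Ht2 : m < t2 <= t1) by (unfold t2, Rmin; destruct Rle_dec; lra).
  assert (Ht2' : t2 <= m + eta / 2) by apply Rmin_r.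
  set (y := fun s => x s * exp (- K * s)).
  destruct (MVT_cor2 y (fun s => (dx s - K * x s) * exp (- K * s)) m t2)
    as [c [Hmvt Hc]]; [lra| |].
  { intros c Hc. apply is_derive_Reals. unfold y.
    eapply is_derive_ext; [intros; reflexivity|].
    replace ((dx c - K * x c) * exp (- K * c))
      with (dx c * exp (- K * c) + x c * (- K * exp (- K * c))) by ring.
    apply (is_derive_mult x (fun s => exp (- K * s))).
    - apply Hd. lra.
    - auto_derive; [trivial | ring].
    - intros; unfold mult; simpl; ring. }
  assert (Hxc : x c < 0) by (apply Hafter; lra).
  assert (Hac : a c <= K).
  { assert (Hdist : Rabs (c - m) < eta) by (rewrite Rabs_right; lra).
    specialize (Hnear c Hdist). apply Rabs_def2 in Hnear. unfold K. lra. }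
  assert (Hdc : K * x c <= dx c) by (eapply Rle_trans; [|apply Hi; lra]; nra).
  pose proof (exp_pos (- K * c)). pose proof (exp_pos (- K * m)). pose proof (exp_pos (- K * t2)).
  assert (Hxt2 : x t2 < 0) by (apply Hafter; lra).
  assert (0 <= (dx c - K * x c) * exp (- K * c) * (t2 - m))
    by (apply Rmult_le_pos; [apply Rmult_le_pos|]; lra).
  assert (0 <= x m * exp (- K * m)) by (apply Rmult_le_pos; lra).
  assert (x t2 * exp (- K * t2) < 0) by (apply Rmult_neg_pos; assumption).
  unfold y in Hmvt. lra.
Qed.

Lemma exp_growth_lower_bound (x dx : R -> R) (c : R) :
  (forall t, 0 <= t -> is_derive x t (dx t)) -> (forall t, 0 <= t -> c * x t <= dx t) ->
  forall t, 0 <= t -> x 0 * exp (c * t) <= x t.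
Proof.
  intros Hd Hc t Ht.
  cut (0 <= x t - x 0 * exp (c * t)); [lra|].
  apply (nonneg_forward_invariant (fun s => x s - x 0 * exp (c * s))
           (fun s => dx s - x 0 * (c * exp (c * s))) (fun _ => c) 0); [| | | |exact Ht].
  - intros s Hs. apply (is_derive_minus x (fun s => x 0 * exp (c * s))); [apply Hd, Hs|].
    auto_derive; [trivial | ring].
  - intros; apply continuous_const.
  - rewrite Rmult_0_r, exp_0. lra.
  - intros s Hs _. specialize (Hc s Hs). lra.
Qed.

Lemma exp_decay_upper_bound (x dx : R -> R) (B k t1 : R) : 0 < k ->
  (forall t, t1 <= t -> is_derive x t (dx t)) -> (forall t, t1 <= t -> dx t <= B - k * x t) ->
  forall t, t1 <= t -> x t <= B / k + (x t1 - B / k) * exp (- k * (t - t1)).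
Proof.
  intros Hk Hd Hle t Ht.
  set (y := fun s => B / k + (x t1 - B / k) * exp (- k * (s - t1))).
  cut (0 <= y t - x t); [unfold y; lra|].
  apply (nonneg_forward_invariant (fun s => y s - x s)
           (fun s => (x t1 - B / k) * (- k * exp (- k * (s - t1))) - dx s) (fun _ => - k) t1);
    [| | | |exact Ht].
  - intros s Hs. apply (is_derive_minus y x); [|apply Hd, Hs].
    unfold y. auto_derive; [trivial | unfold Rminus; ring].
  - intros; apply continuous_const.
  - unfold y. rewrite Rminus_diag, Rmult_0_r, exp_0. lra.
  - intros s Hs _. specialize (Hle s Hs). unfold y.
    replace (- k * (B / k + (x t1 - B / k) * exp (- k * (s - t1)) - x s))
      with ((x t1 - B / k) * (- k * exp (- k * (s - t1))) - B + k * x s) by (field; lra).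
    lra.
Qed.

Lemma exp_nonpos_le_1 (x : R) : x <= 0 -> exp x <= 1.
Proof.
  intros Hx. rewrite <- exp_0. destruct (Rle_lt_or_eq_dec _ _ Hx) as [Hlt | ->].
  - left. apply exp_increasing, Hlt.
  - right. reflexivity.
Qed.

Lemma is_lim_p_infty_of_eventually (f : R -> R) (l : R) :
  (forall eps, 0 < eps -> exists T, forall t, T <= t -> Rabs (f t - l) < eps) ->
  is_lim f p_infty l.
Proof.
  intros H. apply is_lim_spec. intros eps. destruct (H eps (cond_pos eps)) as [T HT].
  exists T. intros t Ht. apply HT. lra.
Qed.

Lemma exp_neg_eventually_lt (k e : R) : 0 < k -> 0 < e ->
  exists tau, 0 <= tau /\ forall s, tau <= s -> exp (- k * s) < e.
Proof.
  intros Hk He. exists ((Rabs (ln e) + 1) / k).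
  split; [apply Rdiv_le_0_compat; [pose proof (Rabs_pos (ln e)) |]; lra|].
  intros s Hs. rewrite <- (exp_ln e) by exact He. apply exp_increasing.
  apply Rmult_le_compat_l with (r := k) in Hs; [|lra].
  replace (k * ((Rabs (ln e) + 1) / k)) with (Rabs (ln e) + 1) in Hs by (field; lra).
  pose proof (Rle_abs (- ln e)) as Habs. rewrite Rabs_Ropp in Habs. lra.
Qed.

Lemma exp_growth_reaches (c x0 e : R) : 0 < c -> 0 < x0 -> x0 <= e ->
  exists T, 0 <= T /\ x0 * exp (c * T) = e.
Proof.
  intros Hc Hx0 Hle. exists (ln (e / x0) / c). split.
  - apply Rdiv_le_0_compat; [|exact Hc]. rewrite <- ln_1. apply ln_le; [lra|].
    apply Rmult_le_reg_r with x0; [exact Hx0|]. unfold Rdiv.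
    rewrite Rmult_assoc, Rinv_l by lra. lra.
  - replace (c * (ln (e / x0) / c)) with (ln (e / x0)) by (field; lra).
    rewrite exp_ln by (apply Rdiv_lt_0_compat; lra). field. lra.
Qed.

(** * Picard iteration for planar systems *)

Lemma ex_RInt_of_continuous (h : R -> R) (a b : R) :
  (forall s, continuous h s) -> ex_RInt h a b.
Proof. intros Hc. apply (@ex_RInt_continuous R_CompleteNormedModule). intros; apply Hc. Qed.

Lemma is_RInt_pow (K : R) (m : nat) (t : R) :
  is_RInt (fun s => K * s ^ m) 0 t (K * t ^ S m / INR (S m)).
Proof.
  assert (Hm : INR (S m) <> 0) by (apply not_0_INR; lia).
  replace (K * t ^ S m / INR (S m)) with
    (minus (K * t ^ S m / INR (S m)) (K * 0 ^ S m / INR (S m)))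
    by (unfold minus, plus, opp; simpl; field; exact Hm).
  apply (@is_RInt_derive R_CompleteNormedModule (fun s => K * s ^ S m / INR (S m))).
  - intros x _. auto_derive; [trivial|].
    change (match m with 0%nat => 1 | S _ => INR m + 1 end) with (INR (S m)). field. exact Hm.
  - intros x _. apply (@ex_derive_continuous R_AbsRing R_NormedModule). auto_derive. trivial.
Qed.

Lemma RInt_pow_bound_nonneg (h : R -> R) (K : R) (m : nat) (t : R) :
  (forall s, continuous h s) -> (forall s, 0 <= s -> Rabs (h s) <= K * s ^ m) -> 0 <= t ->
  Rabs (RInt h 0 t) <= K * t ^ S m / INR (S m).
Proof.
  intros Hc Hb Ht.
  apply (@norm_RInt_le R_NormedModule h (fun s => K * s ^ m) 0 t); [exact Ht | | |].
  - intros s Hs. apply Hb. lra.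
  - apply (@RInt_correct R_CompleteNormedModule), ex_RInt_of_continuous, Hc.
  - apply is_RInt_pow.
Qed.

(* The factor [1/(m+1)] is what produces the factorials in the Picard estimates. *)
Lemma RInt_pow_bound (h : R -> R) (K : R) (m : nat) :
  (forall s, continuous h s) -> (forall s, Rabs (h s) <= K * Rabs s ^ m) ->
  forall t, Rabs (RInt h 0 t) <= K * Rabs t ^ S m / INR (S m).
Proof.
  intros Hc Hb t. destruct (Rle_lt_dec 0 t) as [Ht|Ht].
  - rewrite (Rabs_pos_eq t) by lra. apply RInt_pow_bound_nonneg; [exact Hc| |exact Ht].
    intros s Hs. rewrite <- (Rabs_pos_eq s) at 2 by exact Hs. apply Hb.
  - set (h' := fun s => - h (- s)).
    assert (E : RInt h 0 t = RInt h' 0 (- t)).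
    { symmetry. apply is_RInt_unique.
      apply (@is_RInt_comp_opp R_NormedModule h 0 (- t)).
      rewrite Ropp_0, Ropp_involutive.
      apply (@RInt_correct R_CompleteNormedModule), ex_RInt_of_continuous, Hc. }
    rewrite E, (Rabs_left t) by exact Ht. apply RInt_pow_bound_nonneg; [| |lra].
    + intros s. apply (@continuous_opp R_UniformSpace R_AbsRing R_NormedModule (fun s => h (- s))).
      apply (continuous_comp (fun s => - s) h); [|apply Hc].
      apply (@continuous_opp R_UniformSpace R_AbsRing R_NormedModule), continuous_id.
    + intros s Hs. unfold h'. rewrite Rabs_Ropp.
      replace s with (Rabs (- s)) at 2 by (rewrite Rabs_Ropp; apply Rabs_pos_eq, Hs).
      apply Hb.
Qed.

Lemma is_derive_const_plus_RInt (h : R -> R) (z0 t : R) :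
  (forall s, continuous h s) -> is_derive (fun t => z0 + RInt h 0 t) t (h t).
Proof.
  intros Hc.
  assert (HRInt : is_derive (fun t => RInt h 0 t) t (h t)).
  { apply (is_derive_RInt h (fun t => RInt h 0 t) 0 t); [|apply Hc].
    apply filter_forall. intros u.
    apply (@RInt_correct R_CompleteNormedModule), ex_RInt_of_continuous, Hc. }
  replace (h t) with (0 + h t) by ring.
  exact (is_derive_plus (fun _ => z0) _ t 0 _ (is_derive_const_R z0 t) HRInt).
Qed.

Definition lipschitz2 (F : R -> R -> R) (L : R) : Prop :=
  forall a b a' b', Rabs (F a b - F a' b') <= L * (Rabs (a - a') + Rabs (b - b')).

Lemma lipschitz2_close (F : R -> R -> R) (L eps : R) : 0 <= L -> lipschitz2 F L -> 0 < eps ->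
  exists e, 0 < e /\ forall a b a' b', Rabs (a - a') < e -> Rabs (b - b') < e ->
    Rabs (F a b - F a' b') < eps.
Proof.
  intros HL HF He. exists (eps / (2 * (L + 1))).
  split; [apply Rdiv_lt_0_compat; lra|].
  intros a b a' b' Ha Hb. eapply Rle_lt_trans; [apply HF|].
  apply Rle_lt_trans with (L * (2 * (eps / (2 * (L + 1))))).
  - apply Rmult_le_compat_l; lra.
  - replace (L * (2 * (eps / (2 * (L + 1))))) with (eps * (L / (L + 1))) by (field; lra).
    rewrite <- (Rmult_1_r eps) at 2. apply Rmult_lt_compat_l; [exact He|].
    apply Rmult_lt_reg_r with (L + 1); [lra|].
    unfold Rdiv. rewrite Rmult_assoc, Rinv_l; lra.
Qed.

Lemma continuous_lipschitz2_comp (F : R -> R -> R) (L : R) (x y : R -> R) (t : R) :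
  0 <= L -> lipschitz2 F L -> continuous x t -> continuous y t ->
  continuous (fun s => F (x s) (y s)) t.
Proof.
  intros HL HF Hx Hy. apply filterlim_locally. intros eps.
  destruct (lipschitz2_close F L eps HL HF (cond_pos eps)) as [e [He Hclose]].
  pose proof (proj1 (filterlim_locally _ _) Hx (mkposreal e He)) as Hx'.
  pose proof (proj1 (filterlim_locally _ _) Hy (mkposreal e He)) as Hy'.
  generalize (filter_and _ _ Hx' Hy'). apply filter_imp.
  intros s [H1 H2]. apply Hclose; [exact H1 | exact H2].
Qed.

Lemma CVU_lipschitz2_comp (H : R -> R -> R) (L : R) (u v : nat -> R -> R) (U V : R -> R)
    (c : R) (r : posreal) :
  0 <= L -> lipschitz2 H L -> CVU u U c r -> CVU v V c r ->
  CVU (fun n y => H (u n y) (v n y)) (fun y => H (U y) (V y)) c r.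
Proof.
  intros HL HH Hu Hv eps He.
  destruct (lipschitz2_close H L eps HL HH He) as [e [Hepos Hclose]].
  destruct (Hu e Hepos) as [N1 HN1]. destruct (Hv e Hepos) as [N2 HN2].
  exists (max N1 N2). intros n y Hn Hy.
  apply Hclose; [apply HN1 | apply HN2]; (lia || exact Hy).
Qed.

Lemma lipschitz2_fst : lipschitz2 (fun a _ => a) 1.
Proof. intros a b a' b'. pose proof (Rabs_pos (b - b')). lra. Qed.

Lemma lipschitz2_snd : lipschitz2 (fun _ b => b) 1.
Proof. intros a b a' b'. pose proof (Rabs_pos (a - a')). lra. Qed.

Lemma lipschitz2_const (c : R) : lipschitz2 (fun _ _ => c) 0.
Proof. intros a b a' b'. rewrite Rminus_diag, Rabs_R0. lra. Qed.

Lemma lipschitz2_mono (f : R -> R -> R) (L L' : R) :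
  L <= L' -> lipschitz2 f L -> lipschitz2 f L'.
Proof.
  intros HL Hf a b a' b'. eapply Rle_trans; [apply Hf|].
  apply Rmult_le_compat_r; [|exact HL].
  pose proof (Rabs_pos (a - a')). pose proof (Rabs_pos (b - b')). lra.
Qed.

Lemma lipschitz2_ext (f g : R -> R -> R) (L : R) :
  (forall a b, f a b = g a b) -> lipschitz2 f L -> lipschitz2 g L.
Proof. intros Hfg Hf a b a' b'. rewrite <- !Hfg. apply Hf. Qed.

Lemma lipschitz2_plus (f g : R -> R -> R) (Lf Lg : R) :
  lipschitz2 f Lf -> lipschitz2 g Lg -> lipschitz2 (fun a b => f a b + g a b) (Lf + Lg).
Proof.
  intros Hf Hg a b a' b'.
  replace (f a b + g a b - (f a' b' + g a' b')) with ((f a b - f a' b') + (g a b - g a' b')) by ring.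
  eapply Rle_trans; [apply Rabs_triang|].
  pose proof (Hf a b a' b'). pose proof (Hg a b a' b'). lra.
Qed.

Lemma lipschitz2_scal (c : R) (f : R -> R -> R) (L : R) :
  lipschitz2 f L -> lipschitz2 (fun a b => c * f a b) (Rabs c * L).
Proof.
  intros Hf a b a' b'. rewrite <- Rmult_minus_distr_l, Rabs_mult, Rmult_assoc.
  apply Rmult_le_compat_l; [apply Rabs_pos | apply Hf].
Qed.

Lemma lipschitz2_mult (f g : R -> R -> R) (Lf Lg Mf Mg : R) :
  lipschitz2 f Lf -> lipschitz2 g Lg ->
  (forall a b, Rabs (f a b) <= Mf) -> (forall a b, Rabs (g a b) <= Mg) ->
  lipschitz2 (fun a b => f a b * g a b) (Mf * Lg + Mg * Lf).
Proof.
  intros Hf Hg HMf HMg a b a' b'.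
  replace (f a b * g a b - f a' b' * g a' b')
    with (f a b * (g a b - g a' b') + g a' b' * (f a b - f a' b')) by ring.
  eapply Rle_trans; [apply Rabs_triang|]. rewrite !Rabs_mult.
  set (D := Rabs (a - a') + Rabs (b - b')).
  assert (Hfg : Rabs (f a b) * Rabs (g a b - g a' b') <= Mf * (Lg * D)).
  { apply Rmult_le_compat; [apply Rabs_pos | apply Rabs_pos | apply HMf | apply Hg]. }
  assert (Hgf : Rabs (g a' b') * Rabs (f a b - f a' b') <= Mg * (Lf * D)).
  { apply Rmult_le_compat; [apply Rabs_pos | apply Rabs_pos | apply HMg | apply Hf]. }
  lra.
Qed.

Lemma lipschitz2_comp_contraction (phi : R -> R) (f : R -> R -> R) (L : R) :
  (forall x y, Rabs (phi x - phi y) <= Rabs (x - y)) ->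
  lipschitz2 f L -> lipschitz2 (fun a b => phi (f a b)) L.
Proof. intros Hphi Hf a b a' b'. eapply Rle_trans; [apply Hphi | apply Hf]. Qed.

Lemma sum_f_R0_telescope (p : nat -> R) (N : nat) :
  sum_f_R0 (fun k => p (S k) - p k) N = p (S N) - p O.
Proof. induction N as [|N IH]; simpl; [ring | rewrite IH; ring]. Qed.

Lemma Series_zero (a : nat -> R) : (forall n, a n = 0) -> Series a = 0.
Proof.
  intros Ha. rewrite (Series_ext _ (fun n => 0 * a n)) by (intros n; rewrite Ha; ring).
  rewrite Series_scal_l. ring.
Qed.

Lemma exp_majorant_ex_series (C x : R) : ex_series (fun n => C * x ^ n / INR (fact n)).
Proof.
  apply (ex_series_ext (fun n => scal C (x ^ n / INR (fact n)))).
  { intros n. unfold scal; simpl; unfold mult; simpl. unfold Rdiv; ring. }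
  apply (@ex_series_scal_l R_AbsRing R_NormedModule). exists (exp x).
  eapply is_series_ext; [|exact (is_exp_Reals x)].
  intros n. simpl. rewrite pow_n_pow. unfold scal; simpl; unfold mult; simpl.
  unfold Rdiv; ring.
Qed.

Lemma factorial_step_majorant (C D y r : R) (n : nat) :
  0 <= C -> 0 <= D -> Rabs y < r ->
  C * D ^ n * Rabs y ^ S n / INR (fact (S n)) <= C * r * (D * r) ^ n / INR (fact n).
Proof.
  intros HC HD Hy.
  pose proof (lt_0_INR _ (lt_O_fact n)) as Hfact.
  assert (Hn : 1 <= INR (S n)) by (rewrite S_INR; pose proof (pos_INR n); lra).
  assert (Hpow : Rabs y ^ S n <= r ^ S n) by (apply pow_incr; split; [apply Rabs_pos | lra]).
  assert (0 <= D ^ n) by (apply pow_le; exact HD).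
  rewrite fact_simpl, mult_INR, Rpow_mult_distr.
  apply Rle_trans with (C * D ^ n * r ^ S n / INR (fact n)).
  - unfold Rdiv. apply Rmult_le_compat.
    + apply Rmult_le_pos; [apply Rmult_le_pos; assumption | apply pow_le, Rabs_pos].
    + left. apply Rinv_0_lt_compat, Rmult_lt_0_compat; lra.
    + apply Rmult_le_compat_l; [apply Rmult_le_pos|]; assumption.
    + apply Rinv_le_contravar; [exact Hfact|].
      rewrite <- (Rmult_1_l (INR (fact n))) at 1. apply Rmult_le_compat_r; lra.
  - right. simpl pow. unfold Rdiv. ring.
Qed.

(* Weierstrass M-test against the exponential series [C r (D r)^n / n!]. *)
Lemma CVU_of_factorial_steps (p : nat -> R -> R) (C D : R) :
  0 <= C -> 0 <= D ->
  (forall n y, Rabs (p (S n) y - p n y) <= C * D ^ n * Rabs y ^ S n / INR (fact (S n))) ->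
  forall r : posreal,
    CVU (fun n => p (S n)) (fun y => p O y + Series (fun k => p (S k) y - p k y)) 0 r.
Proof.
  intros HC HD Hstep.
  set (u := fun k y => p (S k) y - p k y).
  set (A := fun (r : R) n => C * r * (D * r) ^ n / INR (fact n)).
  assert (Hmaj : forall r n y, Rabs y < r -> Rabs (u n y) <= A r n).
  { intros r n y Hy. eapply Rle_trans; [apply Hstep|]. apply factorial_step_majorant; assumption. }
  assert (HA : forall r, ex_series (A r)).
  { intros r. apply (ex_series_ext (fun n => C * r * (D * r) ^ n / INR (fact n))); [reflexivity|].
    apply exp_majorant_ex_series. }
  assert (Hex : forall y, ex_series (fun k => u k y)).
  { intros y. apply (@ex_series_le R_AbsRing R_CompleteNormedModule _ (A (Rabs y + 1))).
    - intros n. apply Hmaj. lra.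
    - apply HA. }
  assert (Hpartial : forall a, ex_series a -> Un_cv (fun N => sum_f_R0 a N) (Series a)).
  { intros a Ha. apply is_series_Reals, Series_correct, Ha. }
  intros r.
  set (cv := fun y => exist (fun l => Un_cv (fun N => SP u N y) l) (Series (fun k => u k y))
                         (Hpartial _ (Hex y))).
  assert (HAnonneg : forall n, 0 <= A r n).
  { intros n. pose proof (cond_pos r). pose proof (lt_0_INR _ (lt_O_fact n)).
    unfold A, Rdiv. apply Rmult_le_pos; [apply Rmult_le_pos; [nra | apply pow_le; nra]|].
    left. apply Rinv_0_lt_compat. lra. }
  assert (HCVU : CVU (SP u) (SFL u cv) 0 r).
  { apply CVN_CVU. exists (A r), (Series (A r)). split.
    - eapply Un_cv_ext; [|apply Hpartial, HA].
      intros N. apply sum_eq. intros n _. rewrite Rabs_pos_eq; [reflexivity | apply HAnonneg].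
    - intros n y Hy. apply Hmaj. unfold Boule in Hy. rewrite Rminus_0_r in Hy. exact Hy. }
  intros eps Heps. destruct (HCVU eps Heps) as [N HN]. exists N. intros n y Hn Hy.
  specialize (HN n y Hn Hy). unfold SP, SFL, cv, u in HN.
  rewrite (sum_f_R0_telescope (fun k => p k y)) in HN.
  replace (p O y + Series (fun k => p (S k) y - p k y) - p (S n) y)
    with (Series (fun k => p (S k) y - p k y) - (p (S n) y - p O y)) by ring.
  exact HN.
Qed.

Section Picard.
Variables (F G : R -> R -> R) (L M x0 y0 : R).
Hypotheses (HL : 0 <= L) (HF : lipschitz2 F L) (HG : lipschitz2 G L)
  (HFM : forall a b, Rabs (F a b) <= M) (HGM : forall a b, Rabs (G a b) <= M).

Fixpoint picard_iter (n : nat) : (R -> R) * (R -> R) :=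
  match n with
  | O => (fun _ => x0, fun _ => y0)
  | S k =>
      let (x, y) := picard_iter k in
      (fun t => x0 + RInt (fun s => F (x s) (y s)) 0 t,
       fun t => y0 + RInt (fun s => G (x s) (y s)) 0 t)
  end.

Definition picard_x (n : nat) : R -> R := fst (picard_iter n).
Definition picard_y (n : nat) : R -> R := snd (picard_iter n).

Lemma picard_x_S (n : nat) (t : R) :
  picard_x (S n) t = x0 + RInt (fun s => F (picard_x n s) (picard_y n s)) 0 t.
Proof. unfold picard_x, picard_y. simpl. destruct (picard_iter n). reflexivity. Qed.

Lemma picard_y_S (n : nat) (t : R) :
  picard_y (S n) t = y0 + RInt (fun s => G (picard_x n s) (picard_y n s)) 0 t.
Proof. unfold picard_x, picard_y. simpl. destruct (picard_iter n). reflexivity. Qed.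

Lemma continuous_picard (n : nat) (t : R) :
  continuous (picard_x n) t /\ continuous (picard_y n) t.
Proof.
  revert t. induction n as [|n IH]; intros t.
  - split; apply continuous_const.
  - assert (Hcomp : forall H, lipschitz2 H L ->
      forall s, continuous (fun s => H (picard_x n s) (picard_y n s)) s).
    { intros H HH s. apply (continuous_lipschitz2_comp H L); try apply IH; assumption. }
    split.
    + apply (continuous_ext (fun t => x0 + RInt (fun s => F (picard_x n s) (picard_y n s)) 0 t)).
      { intros u. symmetry. apply picard_x_S. }
      eapply continuous_of_is_derive, is_derive_const_plus_RInt, Hcomp, HF.
    + apply (continuous_ext (fun t => y0 + RInt (fun s => G (picard_x n s) (picard_y n s)) 0 t)).
      { intros u. symmetry. apply picard_y_S. }
      eapply continuous_of_is_derive, is_derive_const_plus_RInt, Hcomp, HG.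
Qed.

Lemma continuous_picard_comp (H : R -> R -> R) (n : nat) (t : R) :
  lipschitz2 H L -> continuous (fun s => H (picard_x n s) (picard_y n s)) t.
Proof.
  intros HH. apply (continuous_lipschitz2_comp H L); try apply continuous_picard; assumption.
Qed.

Lemma is_derive_picard_x (n : nat) (t : R) :
  is_derive (picard_x (S n)) t (F (picard_x n t) (picard_y n t)).
Proof.
  apply (is_derive_ext (fun t => x0 + RInt (fun s => F (picard_x n s) (picard_y n s)) 0 t)).
  { intros u. symmetry. apply picard_x_S. }
  apply (is_derive_const_plus_RInt (fun s => F (picard_x n s) (picard_y n s))).
  intros s. apply continuous_picard_comp, HF.
Qed.

Lemma is_derive_picard_y (n : nat) (t : R) :
  is_derive (picard_y (S n)) t (G (picard_x n t) (picard_y n t)).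
Proof.
  apply (is_derive_ext (fun t => y0 + RInt (fun s => G (picard_x n s) (picard_y n s)) 0 t)).
  { intros u. symmetry. apply picard_y_S. }
  apply (is_derive_const_plus_RInt (fun s => G (picard_x n s) (picard_y n s))).
  intros s. apply continuous_picard_comp, HG.
Qed.

Lemma RInt_picard_diff_bound (H : R -> R -> R) (n : nat) (B : R) :
  lipschitz2 H L ->
  (forall s, Rabs (picard_x (S n) s - picard_x n s) + Rabs (picard_y (S n) s - picard_y n s)
             <= B * Rabs s ^ S n) ->
  forall t, Rabs (RInt (fun s => H (picard_x (S n) s) (picard_y (S n) s)) 0 t
                  - RInt (fun s => H (picard_x n s) (picard_y n s)) 0 t)
            <= L * B * Rabs t ^ S (S n) / INR (S (S n)).
Proof.
  intros HH Hdiff t.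
  rewrite <- (@RInt_minus R_CompleteNormedModule) by
    (apply ex_RInt_of_continuous; intros; apply continuous_picard_comp, HH).
  apply RInt_pow_bound.
  - intros s. apply (@continuous_minus R_UniformSpace R_AbsRing R_NormedModule);
      apply continuous_picard_comp, HH.
  - intros s. eapply Rle_trans; [apply HH|].
    rewrite Rmult_assoc. apply Rmult_le_compat_l; [exact HL | apply Hdiff].
Qed.

Lemma picard_step_bound (n : nat) (t : R) :
  Rabs (picard_x (S n) t - picard_x n t) + Rabs (picard_y (S n) t - picard_y n t)
  <= 2 * M * (2 * L) ^ n * Rabs t ^ S n / INR (fact (S n)).
Proof.
  revert t. induction n as [|n IH]; intros t.
  - rewrite picard_x_S, picard_y_S.
    change (fun s => F (picard_x 0 s) (picard_y 0 s)) with (fun _ : R => F x0 y0).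
    change (fun s => G (picard_x 0 s) (picard_y 0 s)) with (fun _ : R => G x0 y0).
    change (picard_x 0 t) with x0. change (picard_y 0 t) with y0.
    rewrite !Rplus_minus_l.
    assert (Hconst : forall c, Rabs c <= M ->
      Rabs (RInt (fun _ => c) 0 t) <= M * Rabs t ^ 1 / INR 1).
    { intros c Hc. apply RInt_pow_bound; [intros; apply continuous_const |].
      intros s. simpl. rewrite Rmult_1_r. exact Hc. }
    pose proof (Hconst _ (HFM x0 y0)). pose proof (Hconst _ (HGM x0 y0)).
    simpl in *. lra.
  - set (B := 2 * M * (2 * L) ^ n / INR (fact (S n))).
    assert (Hdiff : forall s,
      Rabs (picard_x (S n) s - picard_x n s) + Rabs (picard_y (S n) s - picard_y n s)
      <= B * Rabs s ^ S n).
    { intros s. eapply Rle_trans; [apply IH|]. right. unfold B, Rdiv. ring. }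
    rewrite (picard_x_S (S n)), (picard_x_S n), (picard_y_S (S n)), (picard_y_S n).
    rewrite !Rminus_plus_l_l.
    pose proof (RInt_picard_diff_bound F n B HF Hdiff t).
    pose proof (RInt_picard_diff_bound G n B HG Hdiff t).
    eapply Rle_trans; [apply Rplus_le_compat; eassumption|].
    right. unfold B. rewrite (fact_simpl (S n)), mult_INR.
    pose proof (lt_0_INR _ (lt_O_fact (S n))). pose proof (lt_0_INR (S (S n)) ltac:(lia)).
    simpl pow. field. lra.
Qed.

Definition picard_X (t : R) : R :=
  picard_x O t + Series (fun k => picard_x (S k) t - picard_x k t).
Definition picard_Y (t : R) : R :=
  picard_y O t + Series (fun k => picard_y (S k) t - picard_y k t).

Lemma CVU_picard (r : posreal) :
  CVU (fun n => picard_x (S n)) picard_X 0 r /\ CVU (fun n => picard_y (S n)) picard_Y 0 r.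
Proof.
  assert (HM : 0 <= M) by (eapply Rle_trans; [apply Rabs_pos | apply (HFM 0 0)]).
  split; apply (CVU_of_factorial_steps _ (2 * M) (2 * L)); try lra;
    intros n y; eapply Rle_trans; try apply picard_step_bound.
  - pose proof (Rabs_pos (picard_y (S n) y - picard_y n y)). lra.
  - pose proof (Rabs_pos (picard_x (S n) y - picard_x n y)). lra.
Qed.

Lemma picard_XY_0 : picard_X 0 = x0 /\ picard_Y 0 = y0.
Proof.
  assert (Hzero : forall n, picard_x n 0 = x0 /\ picard_y n 0 = y0).
  { intros [|n]; [split; reflexivity|].
    rewrite picard_x_S, picard_y_S, !RInt_point. split; apply Rplus_0_r. }
  unfold picard_X, picard_Y.
  split; rewrite Series_zero; [apply Rplus_0_r | | apply Rplus_0_r |];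
    intros k; destruct (Hzero (S k)), (Hzero k); lra.
Qed.

Lemma is_derive_picard_XY (t : R) :
  is_derive picard_X t (F (picard_X t) (picard_Y t)) /\
  is_derive picard_Y t (G (picard_X t) (picard_Y t)).
Proof.
  set (r := mkposreal (Rabs t + 1) ltac:(pose proof (Rabs_pos t); lra)).
  assert (Bt : Boule 0 r t) by (unfold Boule; simpl; rewrite Rminus_0_r; lra).
  destruct (CVU_picard r) as [UX UY].
  assert (Hpointwise : forall (q : nat -> R -> R) (Z : R -> R), CVU (fun n => q (S n)) Z 0 r ->
            forall y, Boule 0 r y -> Un_cv (fun n => q (S (S n)) y) (Z y)).
  { intros q Z HZ y Hb eps Heps. destruct (HZ eps Heps) as [N HN]. exists N. intros n Hn.
    unfold Rdist. rewrite Rabs_minus_sym. apply HN; [lia | exact Hb]. }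
  split; apply is_derive_Reals.
  - apply (CVU_derivable (fun n => picard_x (S (S n)))
             (fun n y => F (picard_x (S n) y) (picard_y (S n) y)) picard_X
             (fun y => F (picard_X y) (picard_Y y)) 0 r).
    + apply (CVU_lipschitz2_comp F L); assumption.
    + apply Hpointwise, UX.
    + intros n y _. apply is_derive_Reals, is_derive_picard_x.
    + exact Bt.
  - apply (CVU_derivable (fun n => picard_y (S (S n)))
             (fun n y => G (picard_x (S n) y) (picard_y (S n) y)) picard_Y
             (fun y => G (picard_X y) (picard_Y y)) 0 r).
    + apply (CVU_lipschitz2_comp G L); assumption.
    + apply Hpointwise, UY.
    + intros n y _. apply is_derive_Reals, is_derive_picard_y.
    + exact Bt.
Qed.

Theorem picard_global_solution :
  exists X Y : R -> R, X 0 = x0 /\ Y 0 = y0 /\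
    forall t, is_derive X t (F (X t) (Y t)) /\ is_derive Y t (G (X t) (Y t)).
Proof.
  exists picard_X, picard_Y. destruct picard_XY_0 as [HX0 HY0].
  split; [exact HX0 | split; [exact HY0 | exact is_derive_picard_XY]].
Qed.

End Picard.

(** * The SIRS model *)

Lemma I_le_distE0 (s i r : R) : i <= distE0 s i r.
Proof.
  unfold distE0. eapply Rle_trans; [apply Rle_abs|]. rewrite <- sqrt_Rsqr_abs.
  apply sqrt_le_1_alt. pose proof (Rle_0_sqr (s - 1)). pose proof (Rle_0_sqr r).
  unfold Rsqr in *. simpl. lra.
Qed.

Lemma R_le_distE0 (s i r : R) : r <= distE0 s i r.
Proof.
  unfold distE0. eapply Rle_trans; [apply Rle_abs|]. rewrite <- sqrt_Rsqr_abs.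
  apply sqrt_le_1_alt. pose proof (Rle_0_sqr (s - 1)). pose proof (Rle_0_sqr i).
  unfold Rsqr in *. simpl. lra.
Qed.

Lemma distE0_le_in_Dfra (s i r : R) : in_Dfra s i r -> distE0 s i r <= 2 * (i + r).
Proof.
  intros [Hs [Hi [Hr Hsum]]]. unfold distE0.
  rewrite <- (sqrt_square (2 * (i + r))) by lra.
  apply sqrt_le_1_alt. replace (s - 1) with (- (i + r)) by lra. simpl. nra.
Qed.

Definition clamp01 (x : R) : R := Rmax 0 (Rmin 1 x).

Lemma clamp01_bounds (x : R) : 0 <= clamp01 x <= 1.
Proof. unfold clamp01, Rmax, Rmin. repeat destruct Rle_dec; lra. Qed.

Lemma clamp01_id (x : R) : 0 <= x <= 1 -> clamp01 x = x.
Proof. unfold clamp01, Rmax, Rmin. repeat destruct Rle_dec; lra. Qed.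

Lemma clamp01_nonpos (x : R) : x <= 0 -> clamp01 x = 0.
Proof. unfold clamp01, Rmax, Rmin. repeat destruct Rle_dec; lra. Qed.

Lemma clamp01_le (x : R) : 0 <= x -> clamp01 x <= x.
Proof. unfold clamp01, Rmax, Rmin. repeat destruct Rle_dec; lra. Qed.

Lemma clamp01_contraction (x y : R) : Rabs (clamp01 x - clamp01 y) <= Rabs (x - y).
Proof. unfold clamp01, Rmax, Rmin, Rabs. repeat destruct Rle_dec; repeat destruct Rcase_abs; lra. Qed.

Lemma lipschitz2_clamp01_fst : lipschitz2 (fun a _ => clamp01 a) 1.
Proof.
  apply (lipschitz2_comp_contraction clamp01 (fun a _ => a));
    [exact clamp01_contraction | exact lipschitz2_fst].
Qed.

Lemma lipschitz2_clamp01_snd : lipschitz2 (fun _ b => clamp01 b) 1.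
Proof.
  apply (lipschitz2_comp_contraction clamp01 (fun _ b => b));
    [exact clamp01_contraction | exact lipschitz2_snd].
Qed.

Lemma lipschitz2_clamp01_complement : lipschitz2 (fun a b => clamp01 (1 - a - b)) 1.
Proof.
  apply (lipschitz2_comp_contraction clamp01 (fun a b => 1 - a - b)); [exact clamp01_contraction|].
  intros a b a' b'. replace (1 - a - b - (1 - a' - b')) with (- (a - a') + - (b - b')) by ring.
  eapply Rle_trans; [apply Rabs_triang|]. rewrite !Rabs_Ropp. lra.
Qed.

Section SIRS.
Variables b beta nu delta alpha p : R.
Hypotheses (Hb : 0 < b) (Hbeta : 0 < beta) (Hnu : 0 < nu) (Hdelta : 0 < delta)
  (Halpha : 0 < alpha) (Hp : 0 < p < 1).

Local Notation gamma := (gamma0 b nu delta p).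
Local Notation solution := (is_solution b beta nu delta alpha p).

Lemma gamma_minus_delta_pos : 0 < (1 - p) * b + nu.
Proof. assert (0 < (1 - p) * b) by (apply Rmult_lt_0_compat; lra). lra. Qed.

Lemma gamma_pos : 0 < gamma.
Proof. pose proof gamma_minus_delta_pos. unfold gamma0. lra. Qed.

Lemma basicR0_le_1 : basicR0 b beta nu delta p <= 1 <-> beta <= gamma.
Proof.
  pose proof gamma_pos. unfold basicR0. split; intros HR0.
  - replace beta with (beta / gamma * gamma) by (field; lra).
    apply Rle_trans with (1 * gamma); [apply Rmult_le_compat_r | rewrite Rmult_1_l]; lra.
  - apply Rmult_le_reg_r with gamma; [lra|].
    unfold Rdiv. rewrite Rmult_assoc, Rinv_l by lra. lra.
Qed.

(* With [beta <= gamma] and [i <= 1], the linear term of [fI] is dominated by its quadratic one. *)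
Lemma fI_le_neg_sq (s i r : R) : beta <= gamma -> in_Dfra s i r ->
  fI b beta nu delta alpha p s i r <= - ((1 - p) * b + nu) * i * i.
Proof.
  intros Hbg [Hs [Hi [Hr Hsum]]]. unfold fI, gamma0 in *.
  replace s with (1 - i - r) by lra.
  assert (0 <= beta * r * i) by (apply Rmult_le_pos; [apply Rmult_le_pos|]; lra).
  assert (0 <= ((1 - p) * b + nu + delta - beta) * (i - i * i)).
  { apply Rmult_le_pos; [lra|]. assert (i <= 1) by lra. nra. }
  nra.
Qed.

Section Solution.
Variables S I Rc : R -> R.
Hypotheses (Hsol : solution S I Rc) (Hinit : in_Dfra (S 0) (I 0) (Rc 0)).

Local Notation dS t := (fS b beta nu delta alpha p (S t) (I t) (Rc t)).
Local Notation dI t := (fI b beta nu delta alpha p (S t) (I t) (Rc t)).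
Local Notation dR t := (fR b beta nu delta alpha p (S t) (I t) (Rc t)).

Lemma continuous_S (t : R) : 0 <= t -> continuous S t.
Proof. intros Ht. apply (continuous_of_is_derive S t (dS t)), Hsol, Ht. Qed.

Lemma continuous_I (t : R) : 0 <= t -> continuous I t.
Proof. intros Ht. apply (continuous_of_is_derive I t (dI t)), Hsol, Ht. Qed.

Lemma continuous_affine_I (c d t : R) : 0 <= t -> continuous (fun s => c + d * I s) t.
Proof.
  intros Ht. apply (continuous_plus_R (fun _ => c)); [apply continuous_const|].
  apply continuous_scal_R, continuous_I, Ht.
Qed.

Lemma total_population_conserved (t : R) : 0 <= t -> S t + I t + Rc t = 1.
Proof.
  destruct Hinit as [_ [_ [_ Hsum0]]].
  assert (HN : forall sgn t, 0 <= t ->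
    is_derive (fun s => sgn * (S s + I s + Rc s - 1)) t
              ((- b + delta * I t) * (sgn * (S t + I t + Rc t - 1)))).
  { intros sgn u Hu. destruct (Hsol u Hu) as [HS [HI HR]].
    eapply is_derive_ext; [intros; reflexivity|].
    replace ((- b + delta * I u) * (sgn * (S u + I u + Rc u - 1)))
      with (sgn * (dS u + dI u + dR u - 0)) by (unfold fS, fI, fR; ring).
    apply (is_derive_scal (fun s => S s + I s + Rc s - 1)).
    apply (is_derive_minus (fun s => S s + I s + Rc s)); [|apply is_derive_const_R].
    apply (is_derive_plus (fun s => S s + I s)); [apply (is_derive_plus S I)|]; assumption. }
  intros Ht.
  assert (Hsgn : forall sgn, 0 <= sgn * (S t + I t + Rc t - 1)).
  { intros sgn. apply (nonneg_forward_invariant _ _ (fun s => - b + delta * I s) 0 (HN sgn));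
      [apply continuous_affine_I | rewrite Hsum0; lra | intros; lra | exact Ht]. }
  pose proof (Hsgn 1). pose proof (Hsgn (-1)). lra.
Qed.

Lemma I_nonneg (t : R) : 0 <= t -> 0 <= I t.
Proof.
  apply (nonneg_forward_invariant I (fun s => dI s)
           (fun s => (- gamma + delta * I s) + beta * S s) 0).
  - intros u Hu. apply Hsol, Hu.
  - intros u Hu. apply continuous_plus_R; [apply continuous_affine_I, Hu|].
    apply continuous_scal_R, continuous_S, Hu.
  - apply Hinit.
  - intros u _ _. unfold fI, gamma0. lra.
Qed.

Lemma Rc_nonneg (t : R) : 0 <= t -> 0 <= Rc t.
Proof.
  apply (nonneg_forward_invariant Rc (fun s => dR s) (fun s => - (b + alpha) + delta * I s) 0).
  - intros u Hu. apply Hsol, Hu.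
  - intros u Hu. apply continuous_affine_I, Hu.
  - apply Hinit.
  - intros u Hu _. unfold fR.
    assert (0 <= nu * I u) by (apply Rmult_le_pos; [lra | apply I_nonneg, Hu]). lra.
Qed.

Lemma S_nonneg (t : R) : 0 <= t -> 0 <= S t.
Proof.
  apply (nonneg_forward_invariant S (fun s => dS s) (fun s => 0 + - (beta - delta) * I s) 0).
  - intros u Hu. apply Hsol, Hu.
  - intros u Hu. apply continuous_affine_I, Hu.
  - apply Hinit.
  - intros u Hu _. unfold fS.
    replace (1 - S u - p * I u) with ((1 - p) * I u + Rc u)
      by (pose proof (total_population_conserved u Hu); lra).
    pose proof (I_nonneg u Hu). pose proof (Rc_nonneg u Hu).
    assert (0 <= (1 - p) * I u) by (apply Rmult_le_pos; lra).
    assert (0 <= b * ((1 - p) * I u + Rc u)) by (apply Rmult_le_pos; lra).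
    assert (0 <= alpha * Rc u) by (apply Rmult_le_pos; lra).
    lra.
Qed.

Lemma in_Dfra_forward (t : R) : 0 <= t -> in_Dfra (S t) (I t) (Rc t).
Proof.
  intros Ht. repeat split;
    [apply S_nonneg | apply I_nonneg | apply Rc_nonneg | apply total_population_conserved]; exact Ht.
Qed.

(* Comparison with the solution [u] of [u' = -c u^2], [u(0) = I(0)]. *)
Lemma I_le_hyperbolic (t : R) : beta <= gamma -> 0 <= t ->
  I t <= I 0 / (1 + ((1 - p) * b + nu) * I 0 * t).
Proof.
  intros Hbg Ht.
  set (c := (1 - p) * b + nu).
  assert (Hc : 0 < c) by apply gamma_minus_delta_pos.
  pose proof (I_nonneg 0 (Rle_refl 0)) as HI0.
  set (u := fun s => I 0 / (1 + c * I 0 * s)).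
  assert (Hden : forall s, 0 <= s -> 0 < 1 + c * I 0 * s).
  { intros s Hs. assert (0 <= c * I 0 * s) by (apply Rmult_le_pos; [apply Rmult_le_pos|]; lra). lra. }
  assert (Hu : forall s, 0 <= s -> is_derive u s (- c * u s * u s)).
  { intros s Hs. unfold u. pose proof (Hden s Hs). auto_derive; [lra | field; lra]. }
  cut (0 <= u t - I t); [unfold u; lra|].
  apply (nonneg_forward_invariant (fun s => u s - I s) (fun s => - c * u s * u s - dI s)
           (fun s => - c * (u s + I s)) 0); [| | | |exact Ht].
  - intros s Hs. apply (is_derive_minus u I); [apply Hu, Hs | apply Hsol, Hs].
  - intros s Hs. apply continuous_scal_R, continuous_plus_R;
      [apply (continuous_of_is_derive u s _ (Hu s Hs)) | apply continuous_I, Hs].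
  - unfold u. rewrite Rmult_0_r, Rplus_0_r, Rdiv_1_r. lra.
  - intros s Hs _. pose proof (fI_le_neg_sq _ _ _ Hbg (in_Dfra_forward s Hs)) as Hquad.
    fold c in Hquad. lra.
Qed.

Lemma I_le_initial (t : R) : beta <= gamma -> 0 <= t -> I t <= I 0.
Proof.
  intros Hbg Ht. eapply Rle_trans; [apply I_le_hyperbolic; assumption|].
  pose proof (I_nonneg 0 (Rle_refl 0)).
  assert (0 <= ((1 - p) * b + nu) * I 0 * t).
  { pose proof gamma_minus_delta_pos. apply Rmult_le_pos; [apply Rmult_le_pos|]; lra. }
  unfold Rdiv. apply Rle_trans with (I 0 * 1); [|lra]. apply Rmult_le_compat_l; [lra|].
  rewrite <- Rinv_1. apply Rinv_le_contravar; lra.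
Qed.

Lemma I_eventually_lt (eta : R) : beta <= gamma -> 0 < eta ->
  exists T, 0 <= T /\ forall t, T <= t -> I t < eta.
Proof.
  intros Hbg Heta.
  set (c := (1 - p) * b + nu).
  assert (Hc : 0 < c) by apply gamma_minus_delta_pos.
  pose proof (I_nonneg 0 (Rle_refl 0)).
  assert (HT : 0 < 1 / (c * eta)) by (apply Rdiv_lt_0_compat, Rmult_lt_0_compat; lra).
  exists (1 / (c * eta)). split; [lra|]. intros t Ht.
  assert (Hct : 1 <= c * eta * t).
  { apply Rmult_le_compat_l with (r := c * eta) in Ht; [|left; apply Rmult_lt_0_compat; lra].
    replace (c * eta * (1 / (c * eta))) with 1 in Ht by (field; lra). exact Ht. }
  eapply Rle_lt_trans; [apply I_le_hyperbolic; [exact Hbg | lra]|]. fold c.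
  assert (0 <= c * I 0 * t) by (apply Rmult_le_pos; [apply Rmult_le_pos|]; lra).
  apply Rmult_lt_reg_r with (1 + c * I 0 * t); [lra|].
  unfold Rdiv. rewrite Rmult_assoc, Rinv_l by lra. nra.
Qed.

Lemma Rc_le_exp_decay (A t1 : R) : 0 <= t1 -> (forall t, t1 <= t -> I t <= A) ->
  delta * A < b + alpha ->
  forall t, t1 <= t ->
    Rc t <= nu * A / (b + alpha - delta * A) + Rc t1 * exp (- (b + alpha - delta * A) * (t - t1)).
Proof.
  intros Ht1 HA Hk t Ht.
  set (k := b + alpha - delta * A).
  assert (HA0 : 0 <= A) by (apply Rle_trans with (I t1); [apply I_nonneg | apply HA]; lra).
  assert (Hbound := exp_decay_upper_bound Rc (fun s => dR s) (nu * A) k t1 ltac:(unfold k; lra)).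
  eapply Rle_trans; [apply Hbound; [| |exact Ht]|].
  - intros s Hs. apply Hsol. lra.
  - intros s Hs. cbv beta. unfold fR, k.
    pose proof (Rc_nonneg s ltac:(lra)). specialize (HA s Hs).
    assert (nu * I s <= nu * A) by (apply Rmult_le_compat_l; lra).
    assert (delta * I s * Rc s <= delta * A * Rc s)
      by (apply Rmult_le_compat_r; [|apply Rmult_le_compat_l]; lra).
    lra.
  - assert (0 <= nu * A / k) by (apply Rdiv_le_0_compat; [apply Rmult_le_pos|unfold k]; lra).
    pose proof (exp_pos (- k * (t - t1))). nra.
Qed.

Lemma Rc_le_of_I_le (A : R) : (forall t, 0 <= t -> I t <= A) -> 2 * delta * A <= b + alpha ->
  forall t, 0 <= t -> Rc t <= Rc 0 + 2 * nu * A / (b + alpha).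
Proof.
  intros HA HdA t Ht.
  eapply Rle_trans; [apply (Rc_le_exp_decay A 0 (Rle_refl 0) HA ltac:(lra) t Ht)|].
  assert (HA0 : 0 <= A) by (apply Rle_trans with (I 0); [apply I_nonneg | apply HA]; lra).
  assert (Hstat : nu * A / (b + alpha - delta * A) <= 2 * nu * A / (b + alpha)).
  { unfold Rdiv. replace (2 * nu * A * / (b + alpha)) with (nu * A * / ((b + alpha) / 2))
      by (field; lra).
    apply Rmult_le_compat_l; [nra|]. apply Rinv_le_contravar; lra. }
  assert (Hexp : Rc 0 * exp (- (b + alpha - delta * A) * (t - 0)) <= Rc 0).
  { pose proof (Rc_nonneg 0 (Rle_refl 0)). rewrite <- (Rmult_1_r (Rc 0)) at 2.
    apply Rmult_le_compat_l; [lra|]. apply exp_nonpos_le_1. nra. }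
  lra.
Qed.

Lemma Rc_eventually_lt (eps : R) : beta <= gamma -> 0 < eps ->
  exists T, 0 <= T /\ forall t, T <= t -> Rc t < eps.
Proof.
  intros Hbg Heps.
  set (eta := Rmin ((b + alpha) / (2 * delta)) (eps * (b + alpha) / (4 * nu))).
  assert (Heta1 : eta <= (b + alpha) / (2 * delta)) by apply Rmin_l.
  assert (Heta2 : eta <= eps * (b + alpha) / (4 * nu)) by apply Rmin_r.
  assert (Heta : 0 < eta).
  { apply Rmin_glb_lt; apply Rdiv_lt_0_compat; try apply Rmult_lt_0_compat; lra. }
  destruct (I_eventually_lt eta Hbg Heta) as [t1 [Ht1 HI]].
  set (k := b + alpha - delta * eta).
  assert (Hk : (b + alpha) / 2 <= k).
  { unfold k. apply Rmult_le_compat_l with (r := delta) in Heta1; [|lra].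
    replace (delta * ((b + alpha) / (2 * delta))) with ((b + alpha) / 2) in Heta1 by (field; lra).
    lra. }
  assert (Hstat : nu * eta / k <= eps / 2).
  { apply Rmult_le_reg_r with k; [lra|]. unfold Rdiv. rewrite Rmult_assoc, Rinv_l by lra.
    apply Rmult_le_compat_l with (r := nu) in Heta2; [|lra].
    replace (nu * (eps * (b + alpha) / (4 * nu))) with (eps / 2 * ((b + alpha) / 2)) in Heta2
      by (field; lra).
    apply Rle_trans with (eps / 2 * ((b + alpha) / 2)); [lra|].
    apply Rmult_le_compat_l; lra. }
  destruct (exp_neg_eventually_lt k (eps / 2) ltac:(lra) ltac:(lra)) as [tau [Htau Hexp]].
  exists (t1 + tau). split; [lra|]. intros t Ht.
  assert (Hdecay := Rc_le_exp_decay eta t1 Ht1 (fun s Hs => Rlt_le _ _ (HI s Hs))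
                      ltac:(unfold k in Hk; lra) t ltac:(lra)).
  fold k in Hdecay. specialize (Hexp (t - t1) ltac:(lra)).
  destruct (in_Dfra_forward t1 Ht1) as [HS1 [HI1 [HR1 Hsum1]]].
  assert (Rc t1 * exp (- k * (t - t1)) <= 1 * exp (- k * (t - t1)))
    by (apply Rmult_le_compat_r; [left; apply exp_pos | lra]).
  lra.
Qed.

(* Near [E0] the factor [beta S - gamma + delta I] of [fI] is at least [(beta - gamma) / 2]. *)
Lemma I_exp_growth_near_E0 (eps : R) : beta * eps <= (beta - gamma) / 4 ->
  (forall t, 0 <= t -> I t < eps /\ Rc t < eps) ->
  forall t, 0 <= t -> I 0 * exp ((beta - gamma) / 2 * t) <= I t.
Proof.
  intros Heps Hsmall.
  apply (exp_growth_lower_bound I (fun t => dI t)); [intros t Ht; apply Hsol, Ht|].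
  intros t Ht. destruct (in_Dfra_forward t Ht) as [HSt [HIt [HRt Hsum]]].
  destruct (Hsmall t Ht) as [HIe HRe].
  unfold fI. fold gamma. replace (S t) with (1 - I t - Rc t) by lra.
  apply Rmult_le_compat_r; [exact HIt|].
  assert (beta * (I t + Rc t) <= beta * (2 * eps)) by (apply Rmult_le_compat_l; lra).
  assert (0 <= delta * I t) by (apply Rmult_le_pos; lra).
  lra.
Qed.

End Solution.

Lemma E0_stable_of_le : beta <= gamma -> E0_stable b beta nu delta alpha p.
Proof.
  intros Hbg eps Heps.
  set (K := 1 + nu / (b + alpha)).
  assert (HK : 1 <= K).
  { unfold K. assert (0 <= nu / (b + alpha)) by (apply Rdiv_le_0_compat; lra). lra. }
  set (d := Rmin ((b + alpha) / (2 * delta)) (eps / (8 * K))).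
  assert (Hd1 : d <= (b + alpha) / (2 * delta)) by apply Rmin_l.
  assert (Hd2 : d <= eps / (8 * K)) by apply Rmin_r.
  assert (Hd : 0 < d) by (apply Rmin_glb_lt; apply Rdiv_lt_0_compat; lra).
  exists d. split; [exact Hd|]. intros S I Rc Hsol Hinit Hdist t Ht.
  assert (HI : forall s, 0 <= s -> I s <= d).
  { intros s Hs. apply Rle_trans with (I 0); [apply (I_le_initial S I Rc); assumption|].
    pose proof (I_le_distE0 (S 0) (I 0) (Rc 0)). lra. }
  assert (HR0 : Rc 0 <= d) by (pose proof (R_le_distE0 (S 0) (I 0) (Rc 0)); lra).
  assert (HdA : 2 * delta * d <= b + alpha).
  { apply Rmult_le_compat_l with (r := 2 * delta) in Hd1; [|lra].
    replace (2 * delta * ((b + alpha) / (2 * delta))) with (b + alpha) in Hd1 by (field; lra).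
    exact Hd1. }
  pose proof (Rc_le_of_I_le S I Rc Hsol Hinit d HI HdA t Ht). pose proof (HI t Ht).
  eapply Rle_lt_trans; [apply distE0_le_in_Dfra, (in_Dfra_forward S I Rc); assumption|].
  apply Rle_lt_trans with (4 * d * K).
  - replace (4 * d * K) with (2 * (d + (d + 2 * nu * d / (b + alpha)))) by (unfold K; field; lra).
    lra.
  - apply Rmult_le_compat_r with (r := 8 * K) in Hd2; [|lra].
    replace (eps / (8 * K) * (8 * K)) with eps in Hd2 by (field; lra). lra.
Qed.

Lemma E0_attracting_of_le : beta <= gamma -> E0_attracting b beta nu delta alpha p.
Proof.
  intros Hbg S I Rc Hsol Hinit.
  assert (HD := in_Dfra_forward S I Rc Hsol Hinit).
  assert (HI : forall eps, 0 < eps -> exists T, 0 <= T /\ forall t, T <= t -> Rabs (I t) < eps).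
  { intros eps Heps. destruct (I_eventually_lt S I Rc Hsol Hinit eps Hbg Heps) as [T [HT Hlt]].
    exists T. split; [exact HT|]. intros t Ht.
    rewrite Rabs_pos_eq by (apply (HD t); lra). apply Hlt, Ht. }
  assert (HR : forall eps, 0 < eps -> exists T, 0 <= T /\ forall t, T <= t -> Rabs (Rc t) < eps).
  { intros eps Heps. destruct (Rc_eventually_lt S I Rc Hsol Hinit eps Hbg Heps) as [T [HT Hlt]].
    exists T. split; [exact HT|]. intros t Ht.
    rewrite Rabs_pos_eq by (apply (HD t); lra). apply Hlt, Ht. }
  split; [|split]; apply is_lim_p_infty_of_eventually; intros eps Heps.
  - destruct (HI (eps / 2) ltac:(lra)) as [T1 [HT1 H1]].
    destruct (HR (eps / 2) ltac:(lra)) as [T2 [HT2 H2]].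
    exists (Rmax T1 T2). intros t Ht.
    pose proof (Rmax_l T1 T2). pose proof (Rmax_r T1 T2).
    destruct (HD t ltac:(lra)) as [_ [_ [_ Hsum]]].
    replace (S t - 1) with (- (I t + Rc t)) by lra. rewrite Rabs_Ropp.
    eapply Rle_lt_trans; [apply Rabs_triang|].
    pose proof (H1 t ltac:(lra)). pose proof (H2 t ltac:(lra)). lra.
  - destruct (HI eps Heps) as [T [_ HT]]. exists T. intros t Ht. rewrite Rminus_0_r. apply HT, Ht.
  - destruct (HR eps Heps) as [T [_ HT]]. exists T. intros t Ht. rewrite Rminus_0_r. apply HT, Ht.
Qed.

(* A bounded, globally Lipschitz field that agrees with [(fI, fR)] on the triangle
   [S = 1 - I - R], [I, R >= 0]. *)
Definition clamped_fI (i r : R) : R :=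
  fI b beta nu delta alpha p (clamp01 (1 - i - r)) (clamp01 i) (clamp01 r).
Definition clamped_fR (i r : R) : R :=
  fR b beta nu delta alpha p (clamp01 (1 - i - r)) (clamp01 i) (clamp01 r).

Definition clamped_const : R := 2 * (beta + gamma + delta + nu + b + alpha).

Lemma clamped_fI_bound (i r : R) : Rabs (clamped_fI i r) <= clamped_const.
Proof.
  pose proof gamma_pos. unfold clamped_fI, fI, clamped_const. fold gamma.
  pose proof (clamp01_bounds i). pose proof (clamp01_bounds (1 - i - r)).
  rewrite Rabs_mult, (Rabs_pos_eq (clamp01 i)) by lra.
  apply Rle_trans with ((beta + gamma + delta) * 1); [|lra].
  apply Rmult_le_compat; [apply Rabs_pos | lra | apply Rabs_le; split; nra | lra].
Qed.

Lemma clamped_fR_bound (i r : R) : Rabs (clamped_fR i r) <= clamped_const.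
Proof.
  pose proof gamma_pos. unfold clamped_fR, fR, clamped_const.
  pose proof (clamp01_bounds i). pose proof (clamp01_bounds r).
  assert (0 <= clamp01 i * clamp01 r <= 1) by (split; nra).
  apply Rabs_le. split; nra.
Qed.

Lemma clamped_fI_lipschitz : lipschitz2 clamped_fI clamped_const.
Proof.
  pose proof gamma_pos.
  apply (lipschitz2_mono _ ((beta + gamma + delta) * 1 + 1 * (Rabs beta * 1 + 0 + Rabs delta * 1))).
  { rewrite !Rabs_pos_eq by lra. unfold clamped_const. lra. }
  apply (lipschitz2_ext
           (fun i r => (beta * clamp01 (1 - i - r) + - gamma + delta * clamp01 i) * clamp01 i)).
  { intros i r. unfold clamped_fI, fI, gamma0. ring. }
  apply (lipschitz2_mult (fun i r => beta * clamp01 (1 - i - r) + - gamma + delta * clamp01 i)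
                         (fun i _ => clamp01 i)).
  - apply (lipschitz2_plus (fun i r => beta * clamp01 (1 - i - r) + - gamma)
                           (fun i _ => delta * clamp01 i)).
    + apply (lipschitz2_plus (fun i r => beta * clamp01 (1 - i - r)) (fun _ _ => - gamma)).
      * apply (lipschitz2_scal beta (fun i r => clamp01 (1 - i - r))), lipschitz2_clamp01_complement.
      * apply lipschitz2_const.
    + apply (lipschitz2_scal delta (fun i _ => clamp01 i)), lipschitz2_clamp01_fst.
  - apply lipschitz2_clamp01_fst.
  - intros i r. pose proof (clamp01_bounds i). pose proof (clamp01_bounds (1 - i - r)).
    apply Rabs_le. split; nra.
  - intros i _. pose proof (clamp01_bounds i). rewrite Rabs_pos_eq; lra.
Qed.

Lemma clamped_fR_lipschitz : lipschitz2 clamped_fR clamped_const.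
Proof.
  pose proof gamma_pos.
  apply (lipschitz2_mono _
           (Rabs nu * 1 + Rabs (-1) * ((b + alpha + delta) * 1 + 1 * (0 + Rabs (- delta) * 1)))).
  { rewrite (Rabs_left (-1)), Rabs_Ropp, !Rabs_pos_eq by lra. unfold clamped_const. lra. }
  apply (lipschitz2_ext
           (fun i r => nu * clamp01 i + -1 * ((b + alpha + - delta * clamp01 i) * clamp01 r))).
  { intros i r. unfold clamped_fR, fR. ring. }
  apply (lipschitz2_plus (fun i _ => nu * clamp01 i)
                         (fun i r => -1 * ((b + alpha + - delta * clamp01 i) * clamp01 r))).
  - apply (lipschitz2_scal nu (fun i _ => clamp01 i)), lipschitz2_clamp01_fst.
  - apply (lipschitz2_scal (-1) (fun i r => (b + alpha + - delta * clamp01 i) * clamp01 r)).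
    apply (lipschitz2_mult (fun i _ => b + alpha + - delta * clamp01 i) (fun _ r => clamp01 r)).
    + apply (lipschitz2_plus (fun _ _ => b + alpha) (fun i _ => - delta * clamp01 i)).
      * apply lipschitz2_const.
      * apply (lipschitz2_scal (- delta) (fun i _ => clamp01 i)), lipschitz2_clamp01_fst.
    + apply lipschitz2_clamp01_snd.
    + intros i _. pose proof (clamp01_bounds i). apply Rabs_le. split; nra.
    + intros _ r. pose proof (clamp01_bounds r). rewrite Rabs_pos_eq; lra.
Qed.

Lemma clamped_solution_in_triangle (X Y : R -> R) :
  (forall t, is_derive X t (clamped_fI (X t) (Y t))) ->
  (forall t, is_derive Y t (clamped_fR (X t) (Y t))) ->
  0 <= X 0 -> 0 <= Y 0 -> X 0 + Y 0 <= 1 ->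
  forall t, 0 <= t -> 0 <= X t /\ 0 <= Y t /\ X t + Y t <= 1.
Proof.
  intros HX HY HX0 HY0 HXY0.
  assert (PX : forall t, 0 <= t -> 0 <= X t).
  { apply (nonneg_forward_invariant X (fun s => clamped_fI (X s) (Y s)) (fun _ => 0) 0);
      [intros; apply HX | intros; apply continuous_const | exact HX0 |].
    intros t _ Hneg. unfold clamped_fI, fI. rewrite (clamp01_nonpos (X t)) by lra. lra. }
  assert (PY : forall t, 0 <= t -> 0 <= Y t).
  { apply (nonneg_forward_invariant Y (fun s => clamped_fR (X s) (Y s)) (fun _ => 0) 0);
      [intros; apply HY | intros; apply continuous_const | exact HY0 |].
    intros t _ Hneg. unfold clamped_fR, fR. rewrite (clamp01_nonpos (Y t)) by lra.
    pose proof (clamp01_bounds (X t)). nra. }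
  (* On [X + Y > 1] the clamped [S] vanishes and [(1 - X - Y)' >= delta clamp01(X) (1 - X - Y)]. *)
  assert (PZ : forall t, 0 <= t -> 0 <= 1 - X t - Y t).
  { apply (nonneg_forward_invariant (fun s => 1 - X s - Y s)
             (fun s => 0 - clamped_fI (X s) (Y s) - clamped_fR (X s) (Y s))
             (fun s => delta * clamp01 (X s)) 0).
    - intros t _. apply (is_derive_minus (fun s => 1 - X s) Y); [|apply HY].
      apply (is_derive_minus (fun _ => 1) X); [apply is_derive_const_R | apply HX].
    - intros t _.
      apply (continuous_lipschitz2_comp (fun a _ => delta * clamp01 a) (Rabs delta * 1) X X);
        [apply Rmult_le_pos; [apply Rabs_pos | lra]
        | apply (lipschitz2_scal delta (fun a _ => clamp01 a)), lipschitz2_clamp01_fst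
        | apply (continuous_of_is_derive X t _ (HX t)) ..].
    - lra.
    - intros t Ht Hneg. specialize (PX t Ht). specialize (PY t Ht).
      unfold clamped_fI, clamped_fR, fI, fR, gamma0.
      rewrite (clamp01_nonpos (1 - X t - Y t)) by lra.
      pose proof (clamp01_bounds (X t)). pose proof (clamp01_bounds (Y t)).
      pose proof (clamp01_le (X t) PX). pose proof (clamp01_le (Y t) PY).
      assert (0 <= delta * clamp01 (X t) * ((X t - clamp01 (X t)) + (Y t - clamp01 (Y t))))
        by (apply Rmult_le_pos; [apply Rmult_le_pos|]; lra).
      assert (0 <= (1 - p) * b * clamp01 (X t)) by (apply Rmult_le_pos; [apply Rmult_le_pos|]; lra).
      assert (0 <= (b + alpha) * clamp01 (Y t)) by (apply Rmult_le_pos; lra).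
      lra. }
  intros t Ht. repeat split; [apply PX | apply PY | pose proof (PZ t Ht); lra]; exact Ht.
Qed.

Lemma exists_solution_in_Dfra (i0 r0 : R) : 0 <= i0 -> 0 <= r0 -> i0 + r0 <= 1 ->
  exists S I Rc, solution S I Rc /\ S 0 = 1 - i0 - r0 /\ I 0 = i0 /\ Rc 0 = r0.
Proof.
  intros Hi0 Hr0 Hir.
  assert (Hc : 0 <= clamped_const) by (pose proof gamma_pos; unfold clamped_const; lra).
  destruct (picard_global_solution clamped_fI clamped_fR clamped_const clamped_const i0 r0 Hc
              clamped_fI_lipschitz clamped_fR_lipschitz clamped_fI_bound clamped_fR_bound)
    as [X [Y [HX0 [HY0 HXY]]]].
  assert (Htri := clamped_solution_in_triangle X Y (fun t => proj1 (HXY t)) (fun t => proj2 (HXY t))).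
  exists (fun t => 1 - X t - Y t), X, Y.
  split; [|rewrite HX0, HY0; repeat split].
  intros t Ht. destruct (Htri ltac:(lra) ltac:(lra) ltac:(lra) t Ht) as [Hx [Hy Hxy]].
  destruct (HXY t) as [dX dY].
  unfold clamped_fI, clamped_fR in dX, dY. rewrite !clamp01_id in dX, dY by lra.
  split; [|split; assumption].
  replace (fS b beta nu delta alpha p (1 - X t - Y t) (X t) (Y t))
    with (0 - fI b beta nu delta alpha p (1 - X t - Y t) (X t) (Y t)
            - fR b beta nu delta alpha p (1 - X t - Y t) (X t) (Y t))
    by (unfold fS, fI, fR; ring).
  apply (is_derive_minus (fun s => 1 - X s) Y); [|exact dY].
  apply (is_derive_minus (fun _ => 1) X); [apply is_derive_const_R | exact dX].
Qed.

Lemma E0_unstable_of_gt : gamma < beta -> E0_unstable b beta nu delta alpha p.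
Proof.
  intros Hgb Hst.
  set (eps := Rmin 1 ((beta - gamma) / (4 * beta))).
  assert (He1 : eps <= 1) by apply Rmin_l.
  assert (He2 : eps <= (beta - gamma) / (4 * beta)) by apply Rmin_r.
  assert (Heps : 0 < eps) by (apply Rmin_glb_lt; [lra | apply Rdiv_lt_0_compat; lra]).
  assert (Hbeps : beta * eps <= (beta - gamma) / 4).
  { apply Rmult_le_compat_l with (r := beta) in He2; [|lra].
    replace (beta * ((beta - gamma) / (4 * beta))) with ((beta - gamma) / 4) in He2 by (field; lra).
    exact He2. }
  destruct (Hst eps Heps) as [d [Hd Hstable]].
  set (i0 := Rmin (d / 4) (eps / 2)).
  assert (Hi1 : i0 <= d / 4) by apply Rmin_l.
  assert (Hi2 : i0 <= eps / 2) by apply Rmin_r.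
  assert (Hi0 : 0 < i0) by (apply Rmin_glb_lt; lra).
  destruct (exists_solution_in_Dfra i0 0 ltac:(lra) ltac:(lra) ltac:(lra))
    as [S [I [Rc [Hsol [HS0 [HI0 HR0]]]]]].
  assert (Hinit : in_Dfra (S 0) (I 0) (Rc 0)) by (rewrite HS0, HI0, HR0; repeat split; lra).
  assert (Hclose : distE0 (S 0) (I 0) (Rc 0) < d).
  { eapply Rle_lt_trans; [apply distE0_le_in_Dfra, Hinit|]. rewrite HI0, HR0. lra. }
  assert (Hsmall : forall t, 0 <= t -> I t < eps /\ Rc t < eps).
  { intros t Ht. pose proof (Hstable S I Rc Hsol Hinit Hclose t Ht).
    pose proof (I_le_distE0 (S t) (I t) (Rc t)). pose proof (R_le_distE0 (S t) (I t) (Rc t)).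
    lra. }
  destruct (exp_growth_reaches ((beta - gamma) / 2) i0 eps ltac:(lra) Hi0 ltac:(lra))
    as [T [HT Hreach]].
  pose proof (I_exp_growth_near_E0 S I Rc Hsol Hinit eps Hbeps Hsmall T HT).
  pose proof (Hsmall T HT). rewrite HI0 in *. lra.
Qed.

End SIRS.

Theorem theorem1 (b beta nu delta alpha p : R) :
  0 < b -> 0 < beta -> 0 < nu -> 0 < delta -> 0 < alpha -> 0 < p < 1 ->
  (E0_GAS b beta nu delta alpha p <-> basicR0 b beta nu delta p <= 1) /\
  (basicR0 b beta nu delta p > 1 -> E0_unstable b beta nu delta alpha p).
Proof.
  intros Hb Hbeta Hnu Hdelta Halpha Hp.
  pose proof (basicR0_le_1 b beta nu delta p Hb Hnu Hdelta Hp) as HR0.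
  assert (Hunstable : basicR0 b beta nu delta p > 1 -> E0_unstable b beta nu delta alpha p).
  { intros Hgt. apply E0_unstable_of_gt; try assumption.
    apply Rnot_le_lt. intros Hle. apply HR0 in Hle. lra. }
  split; [split | exact Hunstable].
  - intros [Hstable _]. apply Rnot_lt_le. intros Hgt. exact (Hunstable Hgt Hstable).
  - intros Hle. apply HR0 in Hle.
    split; [apply E0_stable_of_le | apply E0_attracting_of_le]; assumption.
Qed.
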